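(* Let $(V,\mathcal{H})$ be a hypergraph and $X,Y\subseteq V$ disjoint. There exists a minimal hitting set $T\in\mathrm{Tr}(\mathcal{H})$ with $X\subseteq T\subseteq V\setminus Y$ if and only if there exists a family of edges $\{E_x\}_{x\in X}\subseteq\mathcal{H}$ such that (1) for every $x\in X$, $(E_x\setminus Y)\cap X=\{x\}$; and (2) for every edge $E\in\mathcal{H}$ with $(E\setminus Y)\cap X=\emptyset$ we have $E\setminus Y\not\subseteq\bigcup_{x\in X}(E_x\setminus Y)$.
   Context: $\mathrm{Tr}(\mathcal{H})$ denotes the set of inclusion-wise minimal hitting sets of $\mathcal{H}$ (sets meeting every edge, minimal under inclusion). *)

From mathcomp Require Import all_boot.
Set Implicit Arguments. Unset Strict Implicit. Unset Printing Implicit Defensive.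

(* A hypergraph (V, H): V a finite vertex type, H : {set {set V}} its edge set. *)

Definition hitting (V : finType) (H : {set {set V}}) : pred {set V} :=
  fun T => [forall E in H, T :&: E != set0].

Definition Tr (V : finType) (H : {set {set V}}) : {set {set V}} :=
  [set T | minset (hitting H) T].

From mathcomp Require Import all_boot.

Set Implicit Arguments.
Unset Strict Implicit.
Unset Printing Implicit Defensive.

(* A minimal transversal T has a private edge E_x with E_x ∩ T = {x} at each of
   its vertices x; for T between X and V \ Y these give the family {E_x}, and an
   edge E avoiding X outside Y that were covered by the E_x \ Y could only be hit
   by T at a vertex of some E_x ∩ T, i.e. inside X.  Conversely,
   S := X ∪ ((V \ Y) \ ⋃ (E_x \ Y)) is a transversal by (2), and any minimal
   transversal T ⊆ S must contain each x ∈ X, since E_x ∩ S = {x}. *)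

Section Transversals.
Variables (V : finType) (H : {set {set V}}).

Lemma hittingP (T : {set V}) :
  reflect (forall E, E \in H -> exists2 v, v \in T & v \in E) (hitting H T).
Proof.
apply: (iffP forallP) => [hT E EH | hT E].
  by have /implyP/(_ EH)/set0Pn[v /setIP[]] := hT E; exists v.
apply/implyP => EH; have [v vT vE] := hT E EH.
by apply/set0Pn; exists v; apply/setIP.
Qed.

Lemma hitting_mem_private (S T E : {set V}) (x : V) :
  hitting H T -> T \subset S -> E \in H -> E :&: S \subset [set x] -> x \in T.
Proof.
move=> /hittingP hT TS EH ES; have [v vT vE] := hT E EH.
have /set1P <- // : v \in [set x].
by apply: (subsetP ES); rewrite inE vE (subsetP TS).
Qed.

Lemma Tr_private_edge (T : {set V}) (x : V) :
  T \in Tr H -> x \in T -> exists2 E, E \in H & E :&: T = [set x].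
Proof.
rewrite inE => /minsetP[hT minT] xT.
have /negP : ~ hitting H (T :\ x).
  move=> /minT/(_ (subsetDl _ _))/setP/(_ x).
  by rewrite !inE eqxx xT.
rewrite negb_forall => /existsP[E]; rewrite negb_imply negbK => /andP[EH /eqP ETx].
have ETx1 : E :&: T \subset [set x].
  apply/subsetP => v /setIP[vE vT]; apply/set1P; case: (eqVneq v x) => // vx.
  by have /setP/(_ v) := ETx; rewrite !inE vx vT vE.
exists E => //; apply/eqP; rewrite eqEsubset ETx1 sub1set.
have [v vT vE] := hittingP _ hT E EH.
have /set1P <- : v \in [set x] by apply: (subsetP ETx1); apply/setIP.
by apply/setIP.
Qed.

Definition private_edge (T : {set V}) (x : V) : {set V} :=
  odflt set0 [pick E in H | E :&: T == [set x]].

Lemma private_edgeP (T : {set V}) (x : V) : T \in Tr H -> x \in T ->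
  private_edge T x \in H /\ private_edge T x :&: T = [set x].
Proof.
move=> TTr xT; rewrite /private_edge; case: pickP => [E /andP[EH /eqP ETx] | noE] //=.
have [E EH ETx] := Tr_private_edge TTr xT.
by have := noE E; rewrite EH ETx eqxx.
Qed.

Section FromTransversal.
Variables (T X Y : {set V}).
Hypotheses (TTr : T \in Tr H) (XT : X \subset T) (TY : T \subset ~: Y).

Lemma private_edge_trace (x : V) : x \in X ->
  (private_edge T x :\: Y) :&: X = [set x].
Proof.
move=> xX; have [_ ETx] := private_edgeP TTr (subsetP XT x xX).
have XnY : X \subset ~: Y := subset_trans XT TY.
rewrite setDE -setIA (setIidPr XnY) -(setIidPr XT) setIA ETx.
by apply/setIidPl; rewrite sub1set.
Qed.

Lemma private_edges_not_cover (E : {set V}) : E \in H -> (E :\: Y) :&: X = set0 ->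
  ~~ (E :\: Y \subset \bigcup_(x in X) (private_edge T x :\: Y)).
Proof.
move=> EH EX0; apply/negP => /subsetP Ecov.
have hT : hitting H T by move: TTr; rewrite inE => /minsetp.
have [v vT vE] := hittingP _ hT E EH.
have vEY : v \in E :\: Y by move: (subsetP TY v vT); rewrite !inE vE andbT.
have /bigcupP[x xX] := Ecov v vEY; rewrite inE => /andP[_ vEx].
have [_ ETx] := private_edgeP TTr (subsetP XT x xX).
have /set1P vx : v \in [set x] by rewrite -ETx; apply/setIP.
have : v \in (E :\: Y) :&: X by rewrite inE vEY vx xX.
by rewrite EX0 inE.
Qed.

End FromTransversal.

Section ToTransversal.
Variables (X Y : {set V}) (Ex : V -> {set V}).
Hypotheses (dXY : [disjoint X & Y])
  (Ex_trace : forall x, x \in X -> Ex x \in H /\ (Ex x :\: Y) :&: X = [set x])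
  (Ex_cover : forall E, E \in H -> (E :\: Y) :&: X = set0 ->
     ~~ (E :\: Y \subset \bigcup_(x in X) (Ex x :\: Y))).

Let S := X :|: (~: Y :\: \bigcup_(x in X) (Ex x :\: Y)).

Let notin_Y (v : V) : v \in X -> v \notin Y.
Proof. by move=> vX; rewrite (disjointFr dXY vX). Qed.

Let S_sub : S \subset ~: Y.
Proof. by apply/subsetP => v; rewrite !inE => /orP[/notin_Y | /andP[_ ->]]. Qed.

Let S_hitting : hitting H S.
Proof.
apply/hittingP => E EH; have [EX0 | /set0Pn[v]] := eqVneq ((E :\: Y) :&: X) set0.
  have /subsetPn[v vEY vU] := Ex_cover EH EX0.
  move: vEY; rewrite inE => /andP[vY vE].
  by exists v; rewrite // !inE vY vU orbT.
by rewrite !inE => /andP[/andP[_ vE] vX]; exists v; rewrite // inE vX.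
Qed.

Let Ex_private (x : V) : x \in X -> Ex x :&: S \subset [set x].
Proof.
move=> xX; have [_ ExX] := Ex_trace xX.
apply/subsetP => v /setIP[vEx /setUP[vX | /setDP[vY vU]]].
  by rewrite -ExX; apply/setIP; rewrite inE vEx notin_Y.
by case/negP: vU; apply/bigcupP; exists x; rewrite // inE -in_setC vY vEx.
Qed.

Lemma exists_Tr_between : exists T, [/\ T \in Tr H, X \subset T & T \subset ~: Y].
Proof.
have [T minT TS] := minset_exists S_hitting.
exists T; split; first by rewrite inE.
  apply/subsetP => x xX; have [ExH _] := Ex_trace xX.
  exact: hitting_mem_private (minsetp minT) TS ExH (Ex_private xX).
exact: subset_trans TS S_sub.
Qed.

End ToTransversal.

End Transversals.

Theorem corollary1 (V : finType) (H : {set {set V}}) (X Y : {set V}) :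
  [disjoint X & Y] ->
  (exists T : {set V}, [/\ T \in Tr H, X \subset T & T \subset ~: Y]) <->
  (exists Ex : V -> {set V},
     (forall x, x \in X -> Ex x \in H /\ (Ex x :\: Y) :&: X = [set x]) /\
     (forall E, E \in H -> (E :\: Y) :&: X = set0 ->
        ~~ (E :\: Y \subset \bigcup_(x in X) (Ex x :\: Y)))).
Proof.
move=> dXY; split=> [[T [TTr XT TY]] | [Ex [Ex_trace Ex_cover]]].
  exists (private_edge H T); split; last exact: private_edges_not_cover.
  move=> x xX; split; last exact: private_edge_trace.
  by have [] := private_edgeP TTr (subsetP XT x xX).
exact: exists_Tr_between dXY Ex_trace Ex_cover.
Qed.
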